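(* Let $E(q)=\prod_{k\ge1}(1-q^k)$ and $$X=\frac{E(q^2)^4E(q^3)^8}{E(q)^8E(q^6)^4}.$$ Let $U$ be the operator on formal Laurent series defined by $U\left(\sum_{n\ge n_0}a_nq^n\right)=\sum_{3n\ge n_0}a_{3n}q^n$. Then \begin{align*} U(X)&=10X-36X^2+27X^3,\\ U(X^2)&=-8X+306X^2-2160X^3+5508X^4-5832X^5+2187X^6,\\ U(X^3)&=X-360X^2+10566X^3-99144X^4+423549X^5-944784X^6\\ &\qquad+1141614X^7-708588X^8+177147X^9. \end{align*}
   Context: All identities are identities of formal power series in $q$ (equivalently of holomorphic functions of $\tau$ in the upper half plane with $q=e^{2\pi i\tau}$). *)

From Stdlib Require Import BinNums BinPos ZArith.
From mathcomp Require Import all_boot all_order all_algebra.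
Set Implicit Arguments. Unset Strict Implicit. Unset Printing Implicit Defensive.
Import GRing.Theory Num.Theory.
Local Open Scope ring_scope.

Definition series := nat -> int.

Definition sone : series := fun n => (n == 0%N)%:R.

Definition smul (f g : series) : series :=
  fun n => \sum_(i < n.+1) f i * g (n - i)%N.

Definition spow (f : series) (k : nat) : series := iter k (smul f) sone.

(* Multiplicative inverse of a series with constant term 1:
   1/f = sum_{j>=0} (1 - f)^j ; the coefficient of q^n only involves j <= n. *)
Definition sinv (f : series) : series :=
  fun n => \sum_(j < n.+1) spow (fun m => sone m - f m) j n.

(* E(q^m) = prod_{k>=1} (1 - q^(m k)); the coefficient of q^n only involves
   the factors with k <= n. *)
Definition Eser (m : nat) : series :=
  fun n => (\prod_(1 <= k < n.+1) (1 - 'X^(m * k)) : {poly int})`_n.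

Definition Xser : series :=
  smul (smul (spow (Eser 2) 4) (spow (Eser 3) 8))
       (sinv (smul (spow (Eser 1) 8) (spow (Eser 6) 4))).

Definition Uop (f : series) : series := fun n => f (3 * n)%N.

(* Binary integer literals (Stdlib Z) cast into MathComp's int, to avoid
   unary representations of large constants. *)
Definition zi (z : BinNums.Z) : int :=
  match z with
  | BinNums.Z0 => 0
  | BinNums.Zpos p => Posz (BinPos.Pos.to_nat p)
  | BinNums.Zneg p => - Posz (BinPos.Pos.to_nat p)
  end.

(* polynomial combination  sum_i cs_i f^i  (cs listed from degree 0) *)
Definition scomb (cs : seq BinNums.Z) (f : series) : series :=
  fun n => \sum_(i < size cs) zi (nth BinNums.Z0 cs i) * spow f i n.
Delimit Scope Z_scope with coqZ.

(* Let theta = \sum_(n in Z) (-1)^n q^(n^2).  Gauss's identity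
   theta(q) = E(q)^2 / E(q^2), the limit of a finite Jacobi triple product, turns X
   into theta(q^3)^4 / theta(q)^4.  Since squares are 0 or 1 mod 3, theta(q) = a + y
   with a = theta(q^9) and y = q B(q^3).  Taking norms along q^(1/3) -> zeta q^(1/3)
   (zeta^3 = 1) on both sides of Gauss's identity, where the norm of each factor
   1 - q^n is explicit, gives the cubic identity (A^3 + q B^3) A = theta^4 with
   A = theta(q^3); hence 1 - X = q A B^3 / theta^4.  As
   theta(zeta q) theta(zeta^2 q) = a^2 - a y + y^2, the power X^k is a series in q^3
   times (a^2 - a y + y^2)^(4k); U keeps only the monomials a^(8k-3i) y^(3i) of its
   trinomial expansion, and each of them contributes X^(3k-i) (1 - X)^i. *)

From HB Require Import structures.
From Stdlib Require Import ZArith.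
From mathcomp Require Import all_boot all_order all_algebra.
From mathcomp Require Import boolp ring zify ssrZ.
Set Implicit Arguments. Unset Strict Implicit. Unset Printing Implicit Defensive.
Import GRing.Theory Num.Theory.
Local Open Scope ring_scope.

(** * The ring of power series *)

HB.instance Definition _ := gen_eqMixin series.
HB.instance Definition _ := gen_choiceMixin series.

Definition sadd (f g : series) : series := fun n => f n + g n.
Definition sopp (f : series) : series := fun n => - f n.
Definition szero : series := fun _ => 0.

Lemma saddA : associative sadd.
Proof. by move=> f g h; apply: funext => n; rewrite /sadd addrA. Qed.
Lemma saddC : commutative sadd.
Proof. by move=> f g; apply: funext => n; rewrite /sadd addrC. Qed.
Lemma sadd0 : left_id szero sadd.
Proof. by move=> f; apply: funext => n; rewrite /sadd add0r. Qed.
Lemma saddN : left_inverse szero sopp sadd.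
Proof. by move=> f; apply: funext => n; rewrite /sadd /sopp addNr. Qed.
HB.instance Definition _ := GRing.isZmodule.Build series saddA saddC sadd0 saddN.

Definition strunc (n : nat) (f : series) : {poly int} := \poly_(i < n.+1) f i.

Lemma smul_strunc n m (f g : series) :
  (m <= n)%N -> smul f g m = (strunc n f * strunc n g)`_m.
Proof.
move=> le_mn; rewrite coefM /smul; apply: eq_bigr => i _.
have lt_in : (i < n.+1)%N by have := ltn_ord i; lia.
by rewrite !coef_poly lt_in (_ : (m - i < n.+1)%N) //; lia.
Qed.

Lemma smulA : associative smul.
Proof.
move=> f g h; apply: funext => n.
have strunc_smul u v : strunc n (smul u v) = \poly_(i < n.+1) (strunc n u * strunc n v)`_i.
  by apply/polyP => i; rewrite !coef_poly; case: ifP => // lt_in; rewrite (@smul_strunc n).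
rewrite (@smul_strunc n) // [RHS](@smul_strunc n) // !strunc_smul !coefM.
under eq_bigr => i _ do rewrite coef_poly ltnS leq_subr.
under [RHS]eq_bigr => i _ do rewrite coef_poly ltn_ord.
by rewrite -!coefM mulrA.
Qed.

Lemma smulC : commutative smul.
Proof. by move=> f g; apply: funext => n; rewrite !(@smul_strunc n) // mulrC. Qed.

Lemma smul1 : left_id sone smul.
Proof.
move=> f; apply: funext => n; rewrite /smul big_ord_recl /sone /= mul1r subn0.
by rewrite big1 ?addr0 // => i _; rewrite mul0r.
Qed.

Lemma smulDl : left_distributive smul sadd.
Proof.
move=> f g h; apply: funext => n; rewrite /smul /sadd -big_split /=.
by apply: eq_bigr => i _; rewrite mulrDl.
Qed.

Lemma sone_neq0 : sone != szero.
Proof. by apply/eqP => /(congr1 (fun f => f 0%N)). Qed.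

HB.instance Definition _ :=
  GRing.Zmodule_isComNzRing.Build series smulA smulC smul1 smulDl sone_neq0.

Lemma scoefD (f g : series) n : (f + g) n = f n + g n. Proof. by []. Qed.
Lemma scoefB (f g : series) n : (f - g) n = f n - g n. Proof. by []. Qed.
Lemma scoef0 n : (0 : series) n = 0. Proof. by []. Qed.
Lemma scoef1 n : (1 : series) n = (n == 0%N)%:R. Proof. by []. Qed.
Lemma scoefM (f g : series) n : (f * g) n = \sum_(i < n.+1) f i * g (n - i)%N.
Proof. by []. Qed.

Lemma scoef_sum I (r : seq I) (P : pred I) (F : I -> series) n :
  (\sum_(i <- r | P i) F i) n = \sum_(i <- r | P i) F i n.
Proof. by elim/big_rec2: _ => // i a f _ <-. Qed.

Lemma spowE (f : series) k : spow f k = f ^+ k.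
Proof. by elim: k => // k IH; rewrite exprS -IH. Qed.

Lemma scoefM0 (f g : series) : (f * g) 0%N = f 0%N * g 0%N.
Proof. by rewrite scoefM big_ord1. Qed.

Lemma scoefX0 (f : series) k : (f ^+ k) 0%N = f 0%N ^+ k.
Proof. by elim: k => [|k IH]; rewrite ?expr0 // !exprS scoefM0 IH. Qed.

Definition poly_series (p : {poly int}) : series := fun n => p`_n.

Fact poly_series_is_additive : additive poly_series.
Proof. by move=> p r; apply: funext => n; rewrite /poly_series coefB. Qed.
HB.instance Definition _ :=
  GRing.isAdditive.Build {poly int} series poly_series poly_series_is_additive.

Fact poly_series_is_multiplicative : multiplicative poly_series.
Proof.
split; last by apply: funext => n; rewrite /poly_series coef1.
by move=> p r; apply: funext => n; rewrite /poly_series coefM.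
Qed.
HB.instance Definition _ :=
  GRing.isMultiplicative.Build {poly int} series poly_series poly_series_is_multiplicative.

Definition q : series := poly_series 'X.

Lemma qXE k : q ^+ k = poly_series 'X^k.
Proof. by rewrite rmorphXn. Qed.

Lemma scoef_qX k n : (q ^+ k) n = (n == k)%:R.
Proof. by rewrite qXE /poly_series coefXn. Qed.

Lemma scoef_qXM k (f : series) n :
  (q ^+ k * f) n = if (n < k)%N then 0 else f (n - k)%N.
Proof.
rewrite scoefM; case: ltnP => [lt_nk | le_kn].
  rewrite big1 // => i _; rewrite scoef_qX.
  by case: eqP => [eq_ik|_]; [have := ltn_ord i; lia | rewrite mul0r].
rewrite (bigD1 (Ordinal (le_kn : (k < n.+1)%N))) //= scoef_qX eqxx mul1r.
by rewrite big1 ?addr0 // => i /negbTE; rewrite scoef_qX -val_eqE /= => ->; rewrite mul0r.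
Qed.

Lemma qXM_inj k : injective (fun f : series => q ^+ k * f).
Proof.
move=> f g /= eq_fg; apply: funext => n.
by have := congr1 (fun h : series => h (n + k)%N) eq_fg; rewrite !scoef_qXM ltnNge leq_addl addnK.
Qed.

Lemma scoef_intM (c : int) (f : series) n : (c%:~R * f) n = c * f n.
Proof.
have polyCz : (c%:~R : {poly int}) = c%:P by rewrite -[c in RHS]intz polyCMz polyC1.
rewrite -(rmorph_int poly_series) polyCz scoefM big_ord_recl /= subn0 /poly_series coefC /=.
by rewrite big1 ?addr0 // => i _; rewrite coefC mul0r.
Qed.

Definition trunc_eq M (f g : series) := forall n, (n < M)%N -> f n = g n.

Section TruncEq.
Variable M : nat.

Lemma trunc_eq_refl f : trunc_eq M f f. Proof. by []. Qed.
Lemma trunc_eq_sym f g : trunc_eq M f g -> trunc_eq M g f.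
Proof. by move=> eq_fg n lt_nM; rewrite eq_fg. Qed.
Lemma trunc_eq_trans f g h : trunc_eq M f g -> trunc_eq M g h -> trunc_eq M f h.
Proof. by move=> eq_fg eq_gh n lt_nM; rewrite eq_fg ?eq_gh. Qed.
Lemma trunc_eq_le N f g : (N <= M)%N -> trunc_eq M f g -> trunc_eq N f g.
Proof. by move=> le_NM eq_fg n lt_nN; apply: eq_fg; apply: leq_trans le_NM. Qed.

Lemma trunc_eqD f f' g g' :
  trunc_eq M f f' -> trunc_eq M g g' -> trunc_eq M (f + g) (f' + g').
Proof. by move=> eq_f eq_g n lt_nM; rewrite !scoefD eq_f ?eq_g. Qed.
Lemma trunc_eqB f f' g g' :
  trunc_eq M f f' -> trunc_eq M g g' -> trunc_eq M (f - g) (f' - g').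
Proof. by move=> eq_f eq_g n lt_nM; rewrite !scoefB eq_f ?eq_g. Qed.
Lemma trunc_eqM f f' g g' :
  trunc_eq M f f' -> trunc_eq M g g' -> trunc_eq M (f * g) (f' * g').
Proof.
move=> eq_f eq_g n lt_nM; rewrite !scoefM; apply: eq_bigr => i _.
by rewrite eq_f ?eq_g ?(leq_ltn_trans (leq_subr _ _)) ?(leq_trans (ltn_ord i)).
Qed.
Lemma trunc_eqX f g k : trunc_eq M f g -> trunc_eq M (f ^+ k) (g ^+ k).
Proof. by move=> eq_fg; elim: k => // k IH; rewrite !exprS; apply: trunc_eqM. Qed.
Lemma trunc_eq_sum I (r : seq I) (P : pred I) (F G : I -> series) :
  (forall i, P i -> trunc_eq M (F i) (G i)) ->
  trunc_eq M (\sum_(i <- r | P i) F i) (\sum_(i <- r | P i) G i).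
Proof. by move=> eq_FG; elim/big_rec2: _ => // i f g /eq_FG; apply: trunc_eqD. Qed.

Lemma trunc_eq_qX k : (M <= k)%N -> trunc_eq M (q ^+ k) 0.
Proof.
by move=> le_Mk n lt_nM; rewrite scoef_qX; case: eqP => // eq_nk; lia.
Qed.

End TruncEq.

Lemma trunc_eq_all f g : (forall M, trunc_eq M f g) -> f = g.
Proof. by move=> eq_fg; apply: funext => n; apply: (eq_fg n.+1). Qed.

Lemma trunc_eq_strunc n f : trunc_eq n.+1 f (poly_series (strunc n f)).
Proof. by move=> i lt_in; rewrite /poly_series coef_poly lt_in. Qed.

Lemma trunc_eq0M a b (f g : series) :
  trunc_eq a f 0 -> trunc_eq b g 0 -> trunc_eq (a + b) (f * g) 0.
Proof.
move=> f0 g0 n lt_n; rewrite scoefM scoef0 big1 // => i _.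
have [lt_ia | le_ai] := ltnP i a; first by rewrite f0 // mul0r.
by rewrite g0 ?mulr0 //; have := ltn_ord i; lia.
Qed.

(** * Trisection *)

Definition Vop (f : series) : series :=
  fun n => if (3 %| n)%N then f (n %/ 3)%N else 0.

Definition sect (j : nat) (f : series) : series := fun m => f (j + 3 * m)%N.

Lemma scoef_Vop3 g t : Vop g (3 * t)%N = g t.
Proof. by rewrite /Vop dvdn_mulr // mulKn. Qed.

Lemma scoef_Vop_ndvd g n : ~~ (3 %| n)%N -> Vop g n = 0.
Proof. by rewrite /Vop => /negbTE ->. Qed.

Lemma trunc_eq_Vop M f g : trunc_eq M f g -> trunc_eq M (Vop f) (Vop g).
Proof.
move=> eq_fg n lt_nM; rewrite /Vop; case: ifP => // _.
by apply: eq_fg; apply: leq_ltn_trans lt_nM; apply: leq_div.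
Qed.

Lemma Vop_poly p : Vop (poly_series p) = poly_series (p \Po 'X^3).
Proof. by apply: funext => n; rewrite /Vop /poly_series coef_comp_poly_Xn. Qed.

Fact Vop_is_additive : additive Vop.
Proof. by move=> f g; apply: funext => n; rewrite /Vop !scoefB; case: ifP; rewrite ?subr0. Qed.
HB.instance Definition _ := GRing.isAdditive.Build series series Vop Vop_is_additive.

Fact Vop_is_multiplicative : multiplicative Vop.
Proof.
split; last by rewrite -(rmorph1 poly_series) Vop_poly -polyC1 comp_polyC.
move=> f g; apply: trunc_eq_all => M.
have [ef eg] := (@trunc_eq_strunc M f, @trunc_eq_strunc M g).
apply: trunc_eq_le (leqnSn M) _.
apply: trunc_eq_trans (trunc_eq_Vop (trunc_eqM ef eg)) _.
have -> : Vop (poly_series (strunc M f) * poly_series (strunc M g)) =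
          Vop (poly_series (strunc M f)) * Vop (poly_series (strunc M g)).
  by rewrite -(rmorphM poly_series) !Vop_poly comp_polyM (rmorphM poly_series).
by apply: trunc_eqM; apply: trunc_eq_Vop; apply: trunc_eq_sym.
Qed.
HB.instance Definition _ :=
  GRing.isMultiplicative.Build series series Vop Vop_is_multiplicative.

Lemma Vop_q : Vop q = q ^+ 3.
Proof. by rewrite Vop_poly comp_polyX qXE. Qed.

Lemma Vop_qX k : Vop (q ^+ k) = q ^+ (3 * k).
Proof. by rewrite rmorphXn /= Vop_q -exprM. Qed.

Fact sect_is_additive j : additive (sect j).
Proof. by move=> f g; apply: funext. Qed.
HB.instance Definition _ j := GRing.isAdditive.Build series series (sect j)
  (sect_is_additive j).

Definition join3 (a b c : series) : series := Vop a + q * Vop b + q ^+ 2 * Vop c.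

Lemma scoef_join3 a b c r t : (r < 3)%N ->
  join3 a b c (r + 3 * t)%N = nth 0 [:: a; b; c] r t.
Proof.
rewrite /join3 !scoefD -{1}(expr1 q) !scoef_qXM.
case: r => [|[|[|//]]] _ /=.
- rewrite add0n scoef_Vop3.
  by do 2 case: ifP => ?; rewrite ?scoef_Vop_ndvd ?addr0 //; lia.
- rewrite (_ : 1 + 3 * t - 1 = 3 * t)%N ?scoef_Vop3; last lia.
  by case: ifP => ?; rewrite ?scoef_Vop_ndvd ?addr0 ?add0r //; lia.
- rewrite (_ : 2 + 3 * t - 2 = 3 * t)%N ?scoef_Vop3; last lia.
  by rewrite !scoef_Vop_ndvd ?add0r //; lia.
Qed.

Lemma sect_join3 a b c j : (j < 3)%N -> sect j (join3 a b c) = nth 0 [:: a; b; c] j.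
Proof. by move=> lt_j3; apply: funext => m; rewrite /sect scoef_join3. Qed.

Lemma sect0_join3 a b c : sect 0 (join3 a b c) = a. Proof. exact: sect_join3. Qed.
Lemma sect1_join3 a b c : sect 1 (join3 a b c) = b. Proof. exact: sect_join3. Qed.
Lemma sect2_join3 a b c : sect 2 (join3 a b c) = c. Proof. exact: sect_join3. Qed.

Lemma trisection f : join3 (sect 0 f) (sect 1 f) (sect 2 f) = f.
Proof.
apply: funext => n; rewrite (divn_eq n 3) addnC mulnC scoef_join3 ?ltn_pmod //.
by have := ltn_pmod n (isT : (0 < 3)%N); case: (n %% 3)%N => [|[|[|]]].
Qed.

Lemma join3M a b c a' b' c' :
  join3 a b c * join3 a' b' c' =
  join3 (a * a' + q * (b * c' + c * b')) (a * b' + b * a' + q * (c * c'))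
        (a * c' + b * b' + c * a').
Proof. rewrite /join3 !rmorphD !rmorphM /= Vop_q; ring. Qed.

Lemma sect0M f g :
  sect 0 (f * g) = sect 0 f * sect 0 g + q * (sect 1 f * sect 2 g + sect 2 f * sect 1 g).
Proof. by rewrite -{1}(trisection f) -{1}(trisection g) join3M sect0_join3. Qed.

Lemma Vop_join3 a : Vop a = join3 a 0 0.
Proof. by rewrite /join3 rmorph0 !mulr0 !addr0. Qed.

Lemma sect0_VopM a f : sect 0 (Vop a * f) = a * sect 0 f.
Proof. by rewrite sect0M Vop_join3 sect0_join3 sect1_join3 sect2_join3 !mul0r mulr0 !addr0. Qed.

Lemma sect0_qXVop j g :
  sect 0 (q ^+ j * Vop g) = if (3 %| j)%N then q ^+ (j %/ 3) * g else 0.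
Proof.
have -> : q ^+ j * Vop g = q ^+ (j %% 3) * Vop (q ^+ (j %/ 3) * g).
  by rewrite rmorphM /= Vop_qX mulrA -exprD addnC mulnC -divn_eq.
rewrite /dvdn; have := ltn_pmod j (isT : (0 < 3)%N).
case: (j %% 3)%N => [|[|[|//]]] _ /=.
- by rewrite expr0 mul1r Vop_join3 sect0_join3.
- by rewrite (_ : _ * _ = join3 0 (q ^+ (j %/ 3) * g) 0) ?sect0_join3 // /join3 rmorph0; ring.
- by rewrite (_ : _ * _ = join3 0 0 (q ^+ (j %/ 3) * g)) ?sect0_join3 // /join3 rmorph0; ring.
Qed.

(* [norm3 f] is the product of f(zeta^k q^(1/3)) over the cube roots of unity zeta^k. *)
Definition norm3 (f : series) : series :=
  sect 0 f ^+ 3 + q * sect 1 f ^+ 3 + q ^+ 2 * sect 2 f ^+ 3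
  - 3%:R * q * (sect 0 f * sect 1 f * sect 2 f).

Lemma norm3_join3 a b c :
  norm3 (join3 a b c) = a ^+ 3 + q * b ^+ 3 + q ^+ 2 * c ^+ 3 - 3%:R * q * (a * b * c).
Proof. by rewrite /norm3 sect0_join3 sect1_join3 sect2_join3. Qed.

Lemma norm3M f g : norm3 (f * g) = norm3 f * norm3 g.
Proof. by rewrite -(trisection f) -(trisection g) join3M !norm3_join3; ring. Qed.

Lemma norm3_1 : norm3 1 = 1.
Proof.
rewrite [in LHS](_ : 1 = join3 1 0 0) ?norm3_join3; first ring.
by rewrite -Vop_join3 rmorph1.
Qed.

Lemma norm3_1subqX n :
  norm3 (1 - q ^+ n) = if (3 %| n)%N then (1 - q ^+ (n %/ 3)) ^+ 3 else 1 - q ^+ n.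
Proof.
set t := (n %/ 3)%N; have -> : n = (t * 3 + n %% 3)%N by exact: divn_eq.
have := ltn_pmod n (isT : (0 < 3)%N); rewrite /dvdn modnMDl.
case: (n %% 3)%N => [|[|[|//]]] _ /=.
- rewrite addn0 (_ : 1 - _ = join3 (1 - q ^+ t) 0 0) ?norm3_join3; first ring.
  by rewrite /join3 rmorphB rmorph1 /= Vop_qX mulnC; ring.
- rewrite [in LHS](_ : 1 - _ = join3 1 (- q ^+ t) 0) ?norm3_join3.
    by rewrite exprD exprM; ring.
  by rewrite /join3 rmorphN rmorph1 /= Vop_qX mulnC exprD; ring.
- rewrite [in LHS](_ : 1 - _ = join3 1 0 (- q ^+ t)) ?norm3_join3.
    by rewrite exprD exprM; ring.
  by rewrite /join3 rmorphN rmorph1 /= Vop_qX mulnC exprD; ring.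
Qed.

Lemma trunc_eq_sect M j f g :
  (j < 3)%N -> trunc_eq (3 * M) f g -> trunc_eq M (sect j f) (sect j g).
Proof. by move=> lt_j3 eq_fg n lt_nM; apply: eq_fg; lia. Qed.

Lemma trunc_eq_norm3 M f g : trunc_eq (3 * M) f g -> trunc_eq M (norm3 f) (norm3 g).
Proof.
move=> eq_fg; have sect_eq j : (j < 3)%N -> trunc_eq M (sect j f) (sect j g).
  by move=> lt_j3; apply: trunc_eq_sect.
rewrite /norm3; do !(apply: trunc_eqB || apply: trunc_eqD || apply: trunc_eqM
                     || apply: trunc_eqX || apply: trunc_eq_refl || exact: sect_eq).
Qed.

(** * Products and inverses *)

Definition qprod (m K : nat) : series := \prod_(1 <= k < K.+1) (1 - q ^+ (m * k)).

Lemma qprod0 m : qprod m 0 = 1.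
Proof. by rewrite /qprod big_geq. Qed.

Lemma qprodS m K : qprod m K.+1 = qprod m K * (1 - q ^+ (m * K.+1)).
Proof. by rewrite /qprod big_nat_recr. Qed.

Lemma EserE m n : Eser m n = qprod m n n.
Proof.
rewrite /qprod (eq_bigr (fun k => poly_series (1 - 'X^(m * k)))) => [|k _].
  by rewrite -rmorph_prod.
by rewrite rmorphB rmorph1 /= -qXE.
Qed.

Lemma trunc_eq_qprod m n K :
  (0 < m)%N -> (n <= K)%N -> trunc_eq n.+1 (qprod m K) (qprod m n).
Proof.
move=> m_gt0; elim: K => [|K IH] le_nK; first by move: le_nK; rewrite leqn0 => /eqP->.
have [le_nK'|lt_Kn] := leqP n K; last by have -> : n = K.+1 by lia.
apply: trunc_eq_trans (IH le_nK'); rewrite qprodS -[X in trunc_eq _ _ X]mulr1.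
apply: trunc_eqM => //; rewrite -[X in trunc_eq _ _ X]subr0.
by apply: trunc_eqB => //; apply: trunc_eq_qX; nia.
Qed.

Lemma trunc_eq_Eser m M K :
  (0 < m)%N -> (M <= K.+1)%N -> trunc_eq M (Eser m) (qprod m K).
Proof.
by move=> m_gt0 le_MK n lt_nM; rewrite EserE (@trunc_eq_qprod m n K) //; lia.
Qed.

Lemma qprod_coef0 m K : (0 < m)%N -> qprod m K 0%N = 1.
Proof. by move=> m_gt0; rewrite (@trunc_eq_qprod m 0 K) // qprod0. Qed.

Lemma Eser_coef0 m : Eser m 0%N = 1.
Proof. by rewrite /Eser big_geq // coef1. Qed.

Lemma Vop_qprod m K : Vop (qprod m K) = qprod (3 * m) K.
Proof.
rewrite /qprod rmorph_prod; apply: eq_bigr => k _.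
by rewrite rmorphB rmorph1 /= Vop_qX mulnA.
Qed.

Lemma Vop_Eser m : (0 < m)%N -> Vop (Eser m) = Eser (3 * m).
Proof.
move=> m_gt0; apply: trunc_eq_all => M.
apply: trunc_eq_trans (trunc_eq_Vop (@trunc_eq_Eser m M M m_gt0 (leqnSn M))) _.
by rewrite Vop_qprod; apply: trunc_eq_sym; apply: trunc_eq_Eser; rewrite ?muln_gt0.
Qed.

Lemma norm3_qprod m K : ~~ (3 %| m)%N ->
  norm3 (qprod m (3 * K)) * qprod (3 * m) K = qprod m K ^+ 3 * qprod m (3 * K).
Proof.
move=> m_ndvd; elim: K => [|K IH]; first by rewrite muln0 !qprod0 norm3_1; ring.
have ndvd i : (0 < i < 3)%N -> (3 %| m * (3 * K + i))%N = false.
  move=> lt_i3; apply/negbTE; rewrite Euclid_dvdM // negb_or m_ndvd /=.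
  by rewrite dvdn_addr ?dvdn_mulr //; case: i lt_i3 => [|[|[|]]].
have -> : (3 * K.+1 = (3 * K).+3)%N by lia.
rewrite !qprodS !norm3M !norm3_1subqX (_ : m * (3 * K).+3 = 3 * (m * K.+1))%N; last lia.
rewrite (dvdn_mulr _ (dvdnn 3)) mulKn // -mulnA -[(3 * K).+2]addn2 -[(3 * K).+1]addn1 !ndvd //.
set a := 1 - q ^+ (m * (_ + 1)); set b := 1 - q ^+ (m * (_ + 2)).
set c := 1 - q ^+ (m * K.+1); set d := 1 - q ^+ (3 * _).
transitivity (norm3 (qprod m (3 * K)) * qprod (3 * m) K * (a * b * c ^+ 3 * d)); first ring.
by rewrite IH; ring.
Qed.

Lemma norm3_Eser m : ~~ (3 %| m)%N -> norm3 (Eser m) * Eser (3 * m) = Eser m ^+ 4.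
Proof.
move=> m_ndvd; have m_gt0 : (0 < m)%N by case: m m_ndvd.
apply: trunc_eq_all => M.
have E_M : trunc_eq M (Eser m) (qprod m M) by apply: trunc_eq_Eser.
have E_3M : trunc_eq (3 * M) (Eser m) (qprod m (3 * M)) by apply: trunc_eq_Eser.
have E3_M : trunc_eq M (Eser (3 * m)) (qprod (3 * m) M) by apply: trunc_eq_Eser; rewrite ?muln_gt0.
apply: trunc_eq_trans (trunc_eqM (trunc_eq_norm3 E_3M) E3_M) _.
rewrite norm3_qprod // [Eser m ^+ 4]exprSr; apply: trunc_eq_sym; apply: trunc_eqM.
  exact: trunc_eqX.
by apply: trunc_eq_le E_3M; lia.
Qed.

Lemma trunc_eq0X a (g : series) k : trunc_eq a g 0 -> trunc_eq (a * k) (g ^+ k) 0.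
Proof.
move=> g0; elim: k => [|k IH]; first by move=> n; rewrite muln0.
by rewrite exprS mulnS; apply: trunc_eq0M.
Qed.

Lemma sinvK (f : series) : f 0%N = 1 -> f * sinv f = 1.
Proof.
move=> f0; set g := 1 - f.
have g_small j : trunc_eq j (g ^+ j) 0.
  rewrite -{1}[j]mul1n; apply: trunc_eq0X => -[|//] _.
  by rewrite /g scoefB f0 scoef1 subrr.
have sinvE n : sinv f n = (\sum_(j < n.+1) g ^+ j) n.
  by rewrite scoef_sum; apply: eq_bigr => j _; rewrite -spowE.
apply: trunc_eq_all => L.
have sinv_L : trunc_eq L (sinv f) (\sum_(j < L) g ^+ j).
  move=> n lt_nL; rewrite sinvE !scoef_sum -(subnKC lt_nL) big_split_ord /=.
  by rewrite [X in _ + X]big1 ?addr0 // => j _; apply: g_small; lia.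
apply: trunc_eq_trans (trunc_eqM (@trunc_eq_refl L f) sinv_L) _.
have -> : f = 1 - g by rewrite /g opprB addrC subrK.
have -> : (1 - g) * \sum_(j < L) g ^+ j = 1 - g ^+ L.
  rewrite [in RHS](_ : 1 = 1 ^+ L); last by rewrite expr1n.
  rewrite subrXX.
  by congr (_ * _); apply: eq_bigr => i _; rewrite expr1n mul1r.
by rewrite -[X in trunc_eq _ _ X]subr0; apply: trunc_eqB => //; apply: g_small.
Qed.

Lemma mulIr_series (f g u : series) : u 0%N = 1 -> f * u = g * u -> f = g.
Proof. by move=> u0 e; rewrite -[f]mulr1 -[g]mulr1 -(sinvK u0) !mulrA e. Qed.

Lemma trunc_eq_sinv M f g : trunc_eq M f g -> trunc_eq M (sinv f) (sinv g).
Proof.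
move=> eq_fg n lt_nM; rewrite /sinv; apply: eq_bigr => j _.
rewrite !spowE; apply: (trunc_eqX _ (trunc_eqB (@trunc_eq_refl M 1) eq_fg)) => //.
Qed.

(** * Gauss's identity *)

Lemma qX_congr e1 e2 : e1 = e2 -> q ^+ e1 = q ^+ e2. Proof. by move->. Qed.

Definition qprod_odd (N : nat) : series := \prod_(i < N) (1 - q ^+ (2 * i + 1)).

Lemma qprod_odd_even N : qprod_odd N * qprod 2 N = qprod 1 (2 * N).
Proof.
elim: N => [|N IH]; first by rewrite /qprod_odd big_ord0 !qprod0 mul1r.
rewrite /qprod_odd big_ord_recr /= -/(qprod_odd N) (_ : 2 * N.+1 = (2 * N).+2)%N; last lia.
rewrite !qprodS -IH !mul1n (_ : 2 * N + 1 = (2 * N).+1)%N; last lia.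
by rewrite (_ : 2 * N.+1 = (2 * N).+2)%N; [ring | lia].
Qed.

(* [jacobi_coef N j] is the coefficient of [z^j] in
   [z^N * \prod_(i < N) (1 + z q^(2i+1)) (1 + z^-1 q^(2i+1))]: each step of the
   recursion multiplies in one more pair of factors. *)
Fixpoint jacobi_coef (N j : nat) {struct N} : series :=
  if N is N'.+1 then
    (if j is j'.+1 then jacobi_coef N' j' else 0) * (1 + q ^+ (4 * N' + 2))
    + q ^+ (2 * N' + 1) * (jacobi_coef N' j + if j is j'.+2 then jacobi_coef N' j' else 0)
  else (j == 0%N)%:R.

Definition jacobi_coef_lag1 N j := if j is j'.+1 then jacobi_coef N j' else 0.
Definition jacobi_coef_lag2 N j := if j is j'.+2 then jacobi_coef N j' else 0.

Lemma jacobi_coefS N j : jacobi_coef N.+1 j =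
  jacobi_coef_lag1 N j * (1 + q ^+ (4 * N + 2))
  + q ^+ (2 * N + 1) * (jacobi_coef N j + jacobi_coef_lag2 N j).
Proof. by []. Qed.

Lemma jacobi_coef_out N j : (2 * N < j)%N -> jacobi_coef N j = 0.
Proof.
elim: N j => [|N IH] [|[|j]] //= lt_j; rewrite ?IH ?mul0r ?add0r ?addr0 ?mulr0 //; lia.
Qed.

Lemma sum_jacobi_coef N L : (2 * N < L)%N ->
  \sum_(j < L) (-1) ^+ j * jacobi_coef N j = (-1) ^+ N * qprod_odd N ^+ 2.
Proof.
elim: N L => [|N IH] L lt_NL.
  case: L lt_NL => [|L] // _; rewrite big_ord_recl big1 => [|i _]; last by rewrite mulr0.
  by rewrite /qprod_odd big_ord0 expr1n !mulr1 addr0.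
case: L lt_NL => [|[|L]] lt_NL; try lia.
set a := 1 + q ^+ (4 * N + 2); set b := q ^+ (2 * N + 1).
rewrite (eq_bigr (fun j : 'I_L.+2 => a * ((-1) ^+ j * jacobi_coef_lag1 N j)
  + b * ((-1) ^+ j * jacobi_coef N j) + b * ((-1) ^+ j * jacobi_coef_lag2 N j))); last first.
  by move=> j _; rewrite jacobi_coefS -/a -/b; ring.
have s1 : \sum_(i < L.+2) (-1) ^+ i * jacobi_coef_lag1 N i = - ((-1) ^+ N * qprod_odd N ^+ 2).
  rewrite big_ord_recl /= mulr0 add0r -(IH L.+1); last lia.
  by rewrite -sumrN; apply: eq_bigr => i _; rewrite /bump /= add1n exprS mulN1r mulNr.
have s3 : \sum_(i < L.+2) (-1) ^+ i * jacobi_coef_lag2 N i = (-1) ^+ N * qprod_odd N ^+ 2.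
  rewrite big_ord_recl /= mulr0 add0r big_ord_recl /= mulr0 add0r -(IH L); last lia.
  by apply: eq_bigr => i _; rewrite /bump /= !add1n !exprS; ring.
rewrite !big_split -!mulr_sumr s1 s3 IH; last lia.
rewrite /qprod_odd big_ord_recr /= (exprS (-1) N) /a /b.
by rewrite (_ : 4 * N + 2 = (2 * N + 1) * 2)%N ?exprM; [ring | lia].
Qed.

(* The three summands of [jacobi_coefS] after the induction hypothesis of
   [jacobi_coef_closed], divided by [q^(N^2) * qprod 2 (2N)]. *)
Definition jacobi_term1 N j m : series :=
  q ^+ (j.-1 * j.-1 + 2 * N + 2 * j) * (1 - q ^+ (2 * j)) * (1 - q ^+ (2 * m)).
Definition jacobi_term0 (j m : nat) : series :=
  q ^+ (j * j + 2 * j) * (1 - q ^+ (2 * m.-1)) * (1 - q ^+ (2 * m)).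
Definition jacobi_term2 N j : series :=
  q ^+ (j.-2 * j.-2 + 4 * N + 2 * j) * (1 - q ^+ (2 * j.-1)) * (1 - q ^+ (2 * j)).

Ltac expand_qX :=
  rewrite ?(mulSn, mulnS, mul0n, muln0, mulnDl, mulnDr, addn0, add0n, addSn, addnS);
  rewrite ?(exprS, exprD, expr0).

Lemma jacobi_terms N j m : (j + m = 2 * N + 2)%N ->
  (1 + q ^+ (4 * N + 2)) * jacobi_term1 N j m
  + q ^+ (2 * N + 1) * (jacobi_term0 j m + jacobi_term2 N j)
  = q ^+ (2 * N + 1 + j * j) * ((1 - q ^+ (2 * (2 * N + 1))) * (1 - q ^+ (2 * (2 * N + 2)))).
Proof.
rewrite /jacobi_term1 /jacobi_term0 /jacobi_term2.
case: j => [|[|a]] e /=.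
- have -> : m = (2 * N + 2)%N by lia.
  by expand_qX; ring.
- have -> : m = (2 * N + 1)%N by lia.
  by expand_qX; ring.
case: m e => [|[|b]] e /=.
- have -> : (4 * N = 2 * a)%N by lia.
  have -> : (2 * N = a)%N by lia.
  by expand_qX; ring.
- have -> : (4 * N = 2 * a + 2)%N by lia.
  have -> : (2 * N = a + 1)%N by lia.
  by expand_qX; ring.
have -> : (4 * N = 2 * a + 2 * b + 4)%N by lia.
have -> : (2 * N = a + b + 2)%N by lia.
by expand_qX; ring.
Qed.

Section JacobiClosedStep.
Variable N : nat.
Hypothesis closed_N : forall i m, (i + m = 2 * N)%N ->
  jacobi_coef N i * qprod 2 i * qprod 2 m * q ^+ (2 * N * i)
  = q ^+ (N * N + i * i) * qprod 2 (2 * N).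

Lemma jacobi_closed_lag1 j m : (j + m = 2 * N + 2)%N ->
  jacobi_coef_lag1 N j * qprod 2 j * qprod 2 m * q ^+ (2 * N.+1 * j)
  = q ^+ (N * N) * qprod 2 (2 * N) * jacobi_term1 N j m.
Proof.
rewrite /jacobi_term1; case: j => [|j] e; first by rewrite /= muln0 expr0; ring.
case: m e => [|m] e; first by rewrite /= jacobi_coef_out ?muln0 ?expr0; [ring | lia].
rewrite /= !qprodS (_ : 2 * N.+1 * j.+1 = 2 * N * j + (2 * N + 2 * j + 2))%N; last nia.
transitivity (jacobi_coef N j * qprod 2 j * qprod 2 m * q ^+ (2 * N * j) *
  ((1 - q ^+ (2 * j.+1)) * (1 - q ^+ (2 * m.+1)) * q ^+ (2 * N + 2 * j + 2))).
  by rewrite exprD; ring.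
rewrite closed_N; last lia.
rewrite (qX_congr (_ : j * j + 2 * N + 2 * j.+1 = j * j + (2 * N + 2 * j + 2))%N); last lia.
by rewrite !exprD; ring.
Qed.

Lemma jacobi_closed_lag0 j m : (j + m = 2 * N + 2)%N ->
  jacobi_coef N j * qprod 2 j * qprod 2 m * q ^+ (2 * N.+1 * j)
  = q ^+ (N * N) * qprod 2 (2 * N) * jacobi_term0 j m.
Proof.
rewrite /jacobi_term0; case: m => [|[|m]] e.
- by rewrite jacobi_coef_out /= ?muln0 ?expr0; [ring | lia].
- by rewrite jacobi_coef_out /= ?muln0 ?expr0; [ring | lia].
rewrite !qprodS (_ : 2 * N.+1 * j = 2 * N * j + 2 * j)%N; last nia.
transitivity (jacobi_coef N j * qprod 2 j * qprod 2 m * q ^+ (2 * N * j) *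
  ((1 - q ^+ (2 * m.+1)) * (1 - q ^+ (2 * m.+2)) * q ^+ (2 * j))).
  by rewrite exprD; ring.
by rewrite closed_N /= ?exprD; [ring | lia].
Qed.

Lemma jacobi_closed_lag2 j m : (j + m = 2 * N + 2)%N ->
  jacobi_coef_lag2 N j * qprod 2 j * qprod 2 m * q ^+ (2 * N.+1 * j)
  = q ^+ (N * N) * qprod 2 (2 * N) * jacobi_term2 N j.
Proof.
rewrite /jacobi_term2; case: j => [|[|j]] e; try by rewrite /= muln0 expr0; ring.
rewrite /= !qprodS (_ : 2 * N.+1 * j.+2 = 2 * N * j + (4 * N + 2 * j + 4))%N; last nia.
transitivity (jacobi_coef N j * qprod 2 j * qprod 2 m * q ^+ (2 * N * j) *
  ((1 - q ^+ (2 * j.+1)) * (1 - q ^+ (2 * j.+2)) * q ^+ (4 * N + 2 * j + 4))).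
  by rewrite exprD; ring.
rewrite closed_N; last lia.
rewrite (qX_congr (_ : j * j + 4 * N + 2 * j.+2 = j * j + (4 * N + 2 * j + 4))%N); last lia.
by rewrite !exprD; ring.
Qed.

End JacobiClosedStep.

Lemma qprod2_double N : qprod 2 (2 * N.+1) =
  qprod 2 (2 * N) * ((1 - q ^+ (2 * (2 * N + 1))) * (1 - q ^+ (2 * (2 * N + 2)))).
Proof.
rewrite (_ : 2 * N.+1 = (2 * N).+2)%N; last lia.
by rewrite !qprodS mulrA !addn1 addn2.
Qed.

Lemma jacobi_coef_closed N i m : (i + m = 2 * N)%N ->
  jacobi_coef N i * qprod 2 i * qprod 2 m * q ^+ (2 * N * i)
  = q ^+ (N * N + i * i) * qprod 2 (2 * N).
Proof.
elim: N i m => [|N IH] i m e.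
  have [-> ->] : i = 0%N /\ m = 0%N by lia.
  by rewrite /= !muln0 qprod0 expr0; ring.
have e' : (i + m = 2 * N + 2)%N by lia.
transitivity ((1 + q ^+ (4 * N + 2)) *
    (jacobi_coef_lag1 N i * qprod 2 i * qprod 2 m * q ^+ (2 * N.+1 * i))
  + q ^+ (2 * N + 1) * (jacobi_coef N i * qprod 2 i * qprod 2 m * q ^+ (2 * N.+1 * i)
  + jacobi_coef_lag2 N i * qprod 2 i * qprod 2 m * q ^+ (2 * N.+1 * i))).
  by rewrite jacobi_coefS; ring.
rewrite (jacobi_closed_lag1 IH e') (jacobi_closed_lag0 IH e') (jacobi_closed_lag2 IH e').
transitivity (q ^+ (N * N) * qprod 2 (2 * N) * ((1 + q ^+ (4 * N + 2)) * jacobi_term1 N i m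
   + q ^+ (2 * N + 1) * (jacobi_term0 i m + jacobi_term2 N i))); first ring.
rewrite jacobi_terms // qprod2_double.
rewrite (qX_congr (_ : N.+1 * N.+1 + i * i = N * N + (2 * N + 1 + i * i))%N); last nia.
by rewrite (exprD q (N * N)); ring.
Qed.

(* [theta = \sum_(n in Z) (-1)^n q^(n^2)]; [theta_coef k] collects the terms n = k, -k. *)
Definition theta_coef (k : nat) : int := if k == 0%N then 1 else 2 * (-1) ^+ k.

Definition theta : series := fun n => \sum_(k < n.+1) theta_coef k * (n == k * k)%N%:R.

Definition theta_partial (N : nat) : series :=
  \sum_(k < N.+1) (theta_coef k)%:~R * q ^+ (k * k).

Lemma trunc_eq_theta M N : (M <= N.+1)%N -> trunc_eq M theta (theta_partial N).
Proof.
move=> le_MN n lt_nM; rewrite /theta_partial scoef_sum /theta.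
rewrite (big_ord_widen N.+1 (fun k => theta_coef k * (n == k * k)%N%:R)) ?big_mkcond; last lia.
apply: eq_bigr => k _; rewrite scoef_intM scoef_qX; case: ltnP => // lt_nk.
by rewrite (_ : (n == k * k)%N = false) ?mulr0 //; apply/negbTE; nia.
Qed.

Lemma theta_sq s : theta (s * s)%N = theta_coef s.
Proof.
have lt_s : (s < (s * s).+1)%N by rewrite ltnS; case: s => // s; rewrite leq_pmulr.
rewrite /theta (bigD1 (Ordinal lt_s)) //= eqxx mulr1 big1 ?addr0 // => k ne_ks.
have ne_ks' : (k : nat) != s by apply: contra ne_ks => /eqP eq_ks; apply/eqP; apply: val_inj.
move: (k : nat) ne_ks' => j ne_js.
rewrite (_ : (s * s == j * j)%N = false) ?mulr0 //.
by apply/negbTE; rewrite !mulnn eqn_exp2r // eq_sym.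
Qed.

Lemma theta_nsq n : (forall s, n <> (s * s)%N) -> theta n = 0.
Proof.
by move=> nsq; rewrite /theta big1 // => k _; case: eqP => [/nsq|_] //; rewrite mulr0.
Qed.

Definition sqdist (N j : nat) : nat := ((N - j) + (j - N)) ^ 2.

Lemma sqdist_eq N j : (N * N + j * j = 2 * N * j + sqdist N j)%N.
Proof. by rewrite /sqdist; case: (leqP j N) => _; nia. Qed.

Lemma signrMK a : ((-1) ^+ a * (-1) ^+ a : series) = 1.
Proof. by rewrite -exprMn mulrNN mulr1 expr1n. Qed.

Lemma theta_partial_sym N :
  (-1) ^+ N * \sum_(j < (2 * N).+1) (-1) ^+ j * q ^+ (sqdist N j) = theta_partial N.
Proof.
rewrite (_ : (2 * N).+1 = (N + N.+1)%N); last lia.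
rewrite big_split_ord /= big_ord_recl /= (reindex_inj rev_ord_inj) /=.
rewrite /theta_partial big_ord_recl /= (_ : sqdist N (N + 0) = 0)%N; last by rewrite /sqdist; lia.
rewrite !mulrDr addn0 mulrA signrMK mul1r expr0 addrCA; congr (_ + _).
rewrite !mulr_sumr -big_split /=; apply: eq_bigr => i _.
have lt_iN := ltn_ord i.
rewrite /sqdist (_ : N - (N - i.+1) + (N - i.+1 - N) = i.+1)%N; last lia.
rewrite (_ : N - (N + bump 0 i) + (N + bump 0 i - N) = i.+1)%N; last by rewrite /bump /=; lia.
have sign_low : ((-1) ^+ N * (-1) ^+ (N - i.+1) : series) = (-1) ^+ i.+1.
  by rewrite {1}(_ : N = N - i.+1 + i.+1)%N ?exprD 1?mulrC ?mulrA ?signrMK ?mul1r //; lia.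
have sign_high : ((-1) ^+ N * (-1) ^+ (N + bump 0 i) : series) = (-1) ^+ i.+1.
  by rewrite exprD mulrA signrMK mul1r /bump /= add1n.
rewrite !mulrA sign_low sign_high /bump /= /theta_coef /= intrM intr_sign mulnn.
by move: ((-1) ^+ i.+1 : series) (q ^+ (i.+1 ^ 2)) => s x; ring.
Qed.

Lemma jacobi_coef_qbinom N j m : (j + m = 2 * N)%N ->
  jacobi_coef N j * (qprod 2 j * qprod 2 m) = q ^+ (sqdist N j) * qprod 2 (2 * N).
Proof.
move=> e; apply: (@qXM_inj (2 * N * j)) => /=.
by rewrite [RHS]mulrA -exprD -sqdist_eq -(jacobi_coef_closed e); ring.
Qed.

Lemma trunc_eq_jacobi_coef M j : (j <= 4 * M)%N ->
  trunc_eq M (jacobi_coef (2 * M) j * Eser 2) (q ^+ (sqdist (2 * M) j)).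
Proof.
set N := (2 * M)%N; set m := (2 * N - j)%N; set d := sqdist N j => le_j.
have e : (j + m = 2 * N)%N by rewrite /m /N; lia.
have Qjm0 : (qprod 2 j * qprod 2 m) 0%N = 1 by rewrite scoefM0 !qprod_coef0 ?mulr1.
rewrite (_ : jacobi_coef N j =
             q ^+ d * (qprod 2 (2 * N) * sinv (qprod 2 j * qprod 2 m))); last first.
  by rewrite mulrA -(jacobi_coef_qbinom e) -mulrA sinvK // mulr1.
rewrite -mulrA; set Y := _ * Eser 2.
have [le_Md | lt_dM] := leqP M d.
  have qd0 : trunc_eq M (q ^+ d) 0 by apply: trunc_eq_qX.
  have qdY0 : trunc_eq M (q ^+ d * Y) 0 by rewrite -[M]addn0; apply: trunc_eq0M => // n.
  exact: trunc_eq_trans qdY0 (trunc_eq_sym qd0).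
have near_N : (N - j + (j - N) < M)%N by move: lt_dM; rewrite /d /sqdist; nia.
have E2_Q k : (M <= k)%N -> trunc_eq M (qprod 2 k) (Eser 2).
  by move=> le_Mk; apply: trunc_eq_sym; apply: trunc_eq_Eser => //; lia.
rewrite -[X in trunc_eq _ _ X]mulr1; apply: trunc_eqM => //.
apply: (@trunc_eq_trans _ _ (Eser 2 * sinv (Eser 2 * Eser 2) * Eser 2)).
  apply: trunc_eqM => //; apply: trunc_eqM; first by apply: E2_Q; rewrite /N; lia.
  by apply: trunc_eq_sinv; apply: trunc_eqM; apply: E2_Q; rewrite /m /N; lia.
by rewrite mulrAC sinvK ?scoefM0 ?Eser_coef0 ?mulr1.
Qed.

Lemma gauss_theta : theta * Eser 2 = Eser 1 ^+ 2.
Proof.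
apply: trunc_eq_all => M; set N := (2 * M)%N.
have odd_theta : trunc_eq M (qprod_odd N ^+ 2 * Eser 2) theta.
  have sums : trunc_eq M (\sum_(j < (2 * N).+1) (-1) ^+ j * jacobi_coef N j * Eser 2)
                         (\sum_(j < (2 * N).+1) (-1) ^+ j * q ^+ (sqdist N j)).
    apply: trunc_eq_sum => j _; rewrite -mulrA; apply: trunc_eqM => //.
    by apply: trunc_eq_jacobi_coef; have := ltn_ord j; rewrite /N; lia.
  rewrite -mulr_suml sum_jacobi_coef // in sums.
  have := trunc_eqM (@trunc_eq_refl M ((-1) ^+ N)) sums.
  rewrite theta_partial_sym !mulrA signrMK mul1r => /trunc_eq_trans; apply.
  by apply: trunc_eq_sym; apply: trunc_eq_theta; rewrite /N; lia.
have Q_E2 : trunc_eq M (qprod 2 N) (Eser 2) by apply: trunc_eq_sym; apply: trunc_eq_Eser; lia.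
have E1_Q : trunc_eq M (Eser 1) (qprod 1 (2 * N)) by apply: trunc_eq_Eser; lia.
apply: trunc_eq_sym; apply: trunc_eq_trans (trunc_eqX 2 E1_Q) _.
rewrite -qprod_odd_even exprMn [qprod 2 N ^+ 2]expr2 mulrA; apply: trunc_eqM => //.
exact: trunc_eq_trans (trunc_eqM (trunc_eq_refl _) Q_E2) odd_theta.
Qed.

(** * The cubic identity *)

Lemma sect2_theta : sect 2 theta = 0.
Proof.
apply: funext => m; rewrite /sect theta_nsq // => s.
by rewrite (divn_eq s 3); have := ltn_pmod s (isT : (0 < 3)%N); case: (s %% 3)%N => [|[|[|]]]; nia.
Qed.

Lemma theta_coef_mul3 t : theta_coef (t * 3) = theta_coef t.
Proof. by rewrite /theta_coef muln_eq0 orbF -signr_odd oddM andbT signr_odd. Qed.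

Lemma sect0_theta : sect 0 theta = Vop theta.
Proof.
apply: funext => m; rewrite /sect add0n.
have [[s sq_s] | nsq] := pselect (exists s, (3 * m)%N = (s * s)%N).
  have : (3 %| s * s)%N by rewrite -sq_s dvdn_mulr.
  rewrite Euclid_dvdM // orbb => /dvdnP [t def_s].
  have def_m : m = (3 * (t * t))%N by move: sq_s; rewrite def_s; nia.
  by rewrite sq_s theta_sq def_s theta_coef_mul3 def_m scoef_Vop3 theta_sq.
rewrite theta_nsq; last by move=> s sq_s; apply: nsq; exists s.
rewrite /Vop; case: ifP => // /dvdnP [u def_m]; rewrite theta_nsq // => t sq_t.
by apply: nsq; exists (3 * t)%N; move: sq_t; rewrite def_m mulnK //; nia.
Qed.

Lemma theta0 : theta 0%N = 1.
Proof. exact: (theta_sq 0). Qed.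

Lemma theta_sinvK : theta * sinv theta = 1.
Proof. exact: sinvK theta0. Qed.

Section CubicTheta.

Local Notation A := (Vop theta).
Local Notation B := (sect 1 theta).
Local Notation Pi := (sinv theta).

Lemma theta_trisect : theta = Vop A + q * Vop B.
Proof. by rewrite -{1}(trisection theta) sect0_theta sect2_theta /join3 rmorph0 mulr0 addr0. Qed.

Lemma norm3_theta : norm3 theta = A ^+ 3 + q * B ^+ 3.
Proof. by rewrite /norm3 sect0_theta sect2_theta; ring. Qed.

Lemma Vop_gauss_theta : A * Eser 6 = Eser 3 ^+ 2.
Proof. by have := congr1 Vop gauss_theta; rewrite rmorphM rmorphXn /= !Vop_Eser. Qed.

Lemma cubic_theta : (A ^+ 3 + q * B ^+ 3) * A = theta ^+ 4.
Proof.
rewrite -norm3_theta; apply: (@mulIr_series _ _ (Eser 2 ^+ 4 * Eser 6)).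
  by rewrite scoefM0 scoefX0 !Eser_coef0 expr1n mul1r.
rewrite -[in LHS](norm3_Eser (m := 2)) //.
transitivity (norm3 (theta * Eser 2) * Eser 6 * (A * Eser 6)); first by rewrite norm3M; ring.
rewrite gauss_theta Vop_gauss_theta expr2 norm3M.
transitivity ((norm3 (Eser 1) * Eser (3 * 1)) ^+ 2 * Eser 6); first ring.
by rewrite norm3_Eser // -exprM (mulnC 4 2) exprM -gauss_theta; ring.
Qed.

Lemma Xser_theta : Xser = A ^+ 4 * Pi ^+ 4.
Proof.
have -> : Xser = Eser 2 ^+ 4 * Eser 3 ^+ 8 * sinv (Eser 1 ^+ 8 * Eser 6 ^+ 4).
  by rewrite /Xser !spowE.
set W := Eser 1 ^+ 8 * Eser 6 ^+ 4.
have W0 : W 0%N = 1 by rewrite /W scoefM0 !scoefX0 !Eser_coef0 !expr1n mul1r.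
apply: (@mulIr_series _ _ W) => //; rewrite -mulrA (mulrC (sinv W)) sinvK // mulr1.
symmetry; transitivity ((A * Eser 6) ^+ 4 * Pi ^+ 4 * (Eser 1 ^+ 2) ^+ 4).
  by rewrite /W; ring.
rewrite Vop_gauss_theta -gauss_theta.
transitivity (Eser 3 ^+ 8 * Eser 2 ^+ 4 * (theta * Pi) ^+ 4); first ring.
by rewrite theta_sinvK; ring.
Qed.

End CubicTheta.

(** * Trisecting the powers of X *)

(* [trinom n j] is the coefficient of w^j in (1 - w + w^2)^n. *)
Fixpoint trinom (n j : nat) : Z :=
  if n is n'.+1 then
    (trinom n' j - (if j is j'.+1 then trinom n' j' else 0)
     + (if j is j'.+2 then trinom n' j' else 0))%R
  else (j == 0%N)%:R.

Definition trinom_lag (k n j : nat) : Z := if (k <= j)%N then trinom n (j - k) else 0.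

Lemma trinomS n j : trinom n.+1 j = trinom n j - trinom_lag 1 n j + trinom_lag 2 n j.
Proof. by case: j => [|[|j]]; rewrite /trinom_lag /= ?subn1 ?subn2. Qed.

Lemma trinom_out n j : (2 * n < j)%N -> trinom n j = 0.
Proof.
elim: n j => [|n IH] [|[|j]] //= lt_j; rewrite ?IH ?subr0 ?addr0 //; lia.
Qed.

Arguments trinom : simpl never.

Section TrinomialExpansion.
Variables (R : comPzRingType) (a y : R).

Local Notation c z := ((int_of_Z z)%:~R : R).

Lemma trinom_term_eq n j (u v : R) :
  ((j <= 2 * n)%N -> u = v) -> c (trinom n j) * u = c (trinom n j) * v.
Proof.
by case: (leqP j (2 * n)) => [_ /(_ isT)-> // | /trinom_out->]; rewrite rmorph0 !mul0r.
Qed.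

Lemma trinomial_expansion n L : (2 * n < L)%N ->
  (a ^+ 2 - a * y + y ^+ 2) ^+ n = \sum_(j < L) c (trinom n j) * (a ^+ (2 * n - j) * y ^+ j).
Proof.
elim: n L => [|n IH] L lt_nL.
  case: L lt_nL => [|L] // _; rewrite big_ord_recl big1 => [|j _]; last by rewrite rmorph0 mul0r.
  by rewrite /= !mul1r addr0.
case: L lt_nL => [|[|L]] lt_nL; try lia.
set T := fun j => a ^+ (2 * n.+1 - j) * y ^+ j.
have lag0 : \sum_(j < L.+2) c (trinom n j) * T j = \sum_(j < L) c (trinom n j) * T j.
  by rewrite !big_ord_recr /= !trinom_out ?rmorph0 ?mul0r ?addr0 //; lia.
have lag1 : \sum_(j < L.+2) c (trinom_lag 1 n j) * T j = \sum_(j < L) c (trinom n j) * T j.+1.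
  rewrite big_ord_recl big_ord_recr /= /trinom_lag /bump /= !add1n !subn1 /=.
  rewrite trinom_out ?mulr0z ?mul0r ?add0r ?addr0; last lia.
  by apply: eq_bigr => j _; rewrite addKn add1n.
have lag2 : \sum_(j < L.+2) c (trinom_lag 2 n j) * T j = \sum_(j < L) c (trinom n j) * T j.+2.
  rewrite !big_ord_recl /= /trinom_lag /bump /= !add1n !mulr0z !mul0r !add0r.
  by apply: eq_bigr => j _; rewrite !add1n subn2.
under [RHS]eq_bigr do rewrite -/(T _) trinomS !rmorphD !rmorphN /= !mulrDl mulNr.
rewrite !big_split /= sumrN lag0 lag1 lag2 exprS mulrC (IH L) ?mulr_suml; last lia.
rewrite -sumrN -!big_split /=; apply: eq_bigr => j _; rewrite -mulrA -!mulrBr -mulrDr.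
apply: trinom_term_eq => le_j; rewrite /T.
rewrite (_ : 2 * n.+1 - j = (2 * n - j).+2)%N; last lia.
rewrite (_ : 2 * n.+1 - j.+1 = (2 * n - j).+1)%N; last lia.
by rewrite (_ : 2 * n.+1 - j.+2 = 2 * n - j)%N; [rewrite !exprS; ring | lia].
Qed.

End TrinomialExpansion.

Section ThetaCofactor.

Local Notation A := (Vop theta).
Local Notation B := (sect 1 theta).
Local Notation Pi := (sinv theta).
Local Notation c z := ((int_of_Z z)%:~R : series).

(* [theta_cofactor] is theta(zeta q) theta(zeta^2 q) for a primitive cube root of unity zeta. *)
Definition theta_cofactor : series := Vop (A ^+ 2) - q * Vop (A * B) + q ^+ 2 * Vop (B ^+ 2).

Lemma theta_cofactorE :
  theta_cofactor = Vop A ^+ 2 - Vop A * (q * Vop B) + (q * Vop B) ^+ 2.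
Proof. by rewrite /theta_cofactor; ring. Qed.

Lemma theta_mul_cofactor : theta * theta_cofactor = Vop (A ^+ 3 + q * B ^+ 3).
Proof.
by rewrite {1}theta_trisect theta_cofactorE rmorphD rmorphM !rmorphXn /= Vop_q; ring.
Qed.

Lemma sinv_theta_cofactor : Pi = theta_cofactor * Vop (A * Pi ^+ 4).
Proof.
have inv : theta * (theta_cofactor * Vop (A * Pi ^+ 4)) = 1.
  rewrite mulrA theta_mul_cofactor -rmorphM /= mulrA cubic_theta -exprMn theta_sinvK.
  by rewrite expr1n rmorph1.
by rewrite -[LHS]mulr1 -inv mulrA (mulrC Pi) theta_sinvK mul1r.
Qed.

Lemma sect0_cofactorX n L : (2 * n < L)%N ->
  sect 0 (theta_cofactor ^+ n) = \sum_(j < L) c (trinom n j) *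
    (if (3 %| j)%N then q ^+ (j %/ 3) * (A ^+ (2 * n - j) * B ^+ j) else 0).
Proof.
move=> lt_nL; rewrite theta_cofactorE (trinomial_expansion _ _ lt_nL) raddf_sum /=.
apply: eq_bigr => j _; rewrite -[in sect 0 _](rmorph_int Vop) /= sect0_VopM; congr (_ * _).
suff -> : Vop A ^+ (2 * n - j) * (q * Vop B) ^+ j = q ^+ j * Vop (A ^+ (2 * n - j) * B ^+ j).
  exact: sect0_qXVop.
by rewrite rmorphM !rmorphXn /= exprMn mulrCA.
Qed.

Lemma one_sub_Xser : 1 - Xser = A * (q * B ^+ 3) * Pi ^+ 4.
Proof.
rewrite Xser_theta -[1](expr1n _ 4) -theta_sinvK exprMn -cubic_theta; ring.
Qed.

Lemma U_Xser_term k i : (3 * i <= 8 * k)%N ->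
  theta ^+ (4 * k) * (A * Pi ^+ 4) ^+ (4 * k)
    * (q ^+ i * (A ^+ (2 * (4 * k) - 3 * i) * B ^+ (3 * i)))
  = Xser ^+ (3 * k - i) * (1 - Xser) ^+ i.
Proof.
move=> le_ik; rewrite one_sub_Xser Xser_theta.
have eA : A ^+ (4 * k) * A ^+ (2 * (4 * k) - 3 * i) = (A ^+ 4) ^+ (3 * k - i) * A ^+ i.
  by rewrite -!exprM -!exprD; congr (_ ^+ _); lia.
have eP : (Pi ^+ 4) ^+ (4 * k) = Pi ^+ (4 * k) * (Pi ^+ 4) ^+ (3 * k - i) * (Pi ^+ 4) ^+ i.
  by rewrite -!exprM -!exprD; congr (_ ^+ _); lia.
rewrite exprMn; transitivity (theta ^+ (4 * k) * (A ^+ (4 * k) * A ^+ (2 * (4 * k) - 3 * i))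
  * (Pi ^+ 4) ^+ (4 * k) * q ^+ i * B ^+ (3 * i)); first ring.
rewrite eA eP [B ^+ (3 * i)]exprM.
transitivity ((theta * Pi) ^+ (4 * k) * ((A ^+ 4) ^+ (3 * k - i) * (Pi ^+ 4) ^+ (3 * k - i))
  * (A * (q * B ^+ 3) * Pi ^+ 4) ^+ i); first by rewrite !exprMn; ring.
by rewrite theta_sinvK expr1n mul1r -!exprMn.
Qed.

Lemma U_Xser_pow k : Uop (Xser ^+ k) = \sum_(j < (8 * k).+1) c (trinom (4 * k) j) *
  (if (3 %| j)%N then Xser ^+ (3 * k - j %/ 3) * (1 - Xser) ^+ (j %/ 3) else 0).
Proof.
have -> : Xser ^+ k = Vop (theta ^+ (4 * k) * (A * Pi ^+ 4) ^+ (4 * k)) * theta_cofactor ^+ (4 * k).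
  rewrite rmorphM rmorphXn /= [Vop (_ ^+ _)]rmorphXn /= Xser_theta exprMn -!exprM.
  by rewrite [in LHS]sinv_theta_cofactor exprMn (mulrC (theta_cofactor ^+ _)) mulrA.
rewrite [Uop _](sect0_VopM) (sect0_cofactorX (L := (8 * k).+1)) ?mulr_sumr; last lia.
apply: eq_bigr => j _; rewrite mulrCA; congr (_ * _).
have lt_j := ltn_ord j; case: ifP => [/dvdnP [i def_j] | _]; last by rewrite mulr0.
by rewrite def_j mulnK // (mulnC i 3) U_Xser_term //; lia.
Qed.

End ThetaCofactor.

Lemma zi_int_of_Z z : zi z = int_of_Z z.
Proof. by case: z => // p; rewrite /= NegzE prednK //; lia. Qed.

Lemma scombE cs f : scomb cs f = \sum_(i < size cs) (int_of_Z (nth Z0 cs i))%:~R * f ^+ i.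
Proof.
apply: funext => n; rewrite scoef_sum; apply: eq_bigr => i _.
by rewrite scoef_intM spowE zi_int_of_Z.
Qed.

Lemma U_Xser_pow_scomb k cs :
  (forall (R : comPzRingType) (x : R),
    \sum_(j < (8 * k).+1) (int_of_Z (trinom (4 * k) j))%:~R *
      (if (3 %| j)%N then x ^+ (3 * k - j %/ 3) * (1 - x) ^+ (j %/ 3) else 0)
    = \sum_(i < size cs) (int_of_Z (nth Z0 cs i))%:~R * x ^+ i) ->
  Uop (spow Xser k) = scomb cs Xser.
Proof. by move=> poly_eq; rewrite spowE U_Xser_pow scombE poly_eq. Qed.

(* Otherwise [/=] expands the coefficients below into unary naturals. *)
#[local] Arguments int_of_Z : simpl never.

Ltac eval_trinom :=
  repeat match goal with
  | |- context [trinom ?n ?j] =>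
      let v := eval vm_compute in (trinom n j) in
      rewrite (_ : trinom n j = v); last by vm_compute
  end.

Theorem theorem2p3 :
  Uop Xser = scomb [:: 0; 10; -36; 27]%coqZ Xser /\
  Uop (spow Xser 2) =
    scomb [:: 0; -8; 306; -2160; 5508; -5832; 2187]%coqZ Xser /\
  Uop (spow Xser 3) =
    scomb [:: 0; 1; -360; 10566; -99144; 423549; -944784; 1141614;
              -708588; 177147]%coqZ Xser.
Proof.
have -> : Uop Xser = Uop (spow Xser 1) by rewrite spowE expr1.
split; [|split]; apply: U_Xser_pow_scomb => R x;
  by rewrite !big_ord_recl !big_ord0 /=; eval_trinom; ring.
Qed.
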